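(* There exist a real number $d>1$, a family $\mathcal{H}$ of finite graphs with $\mu_{\log}(\mathcal{H})\le d$, and a real $\lambda\in(0,\lambda_c(d))$ such that $\lambda$ is an accumulation point of the zeros of the partition functions $\{Z_H: H\in\mathcal{H}\}$; in particular, no set of the form $\{z\in\mathbb{C}:|z-z_0|<\delta\text{ for some }z_0\in[0,\lambda_c(d))\}$ with $\delta>0$ is zero-free for all $Z_H$, $H\in\mathcal{H}$.
   Context: For a finite graph $G$, $Z_G(z)=\sum_I z^{|I|}$ over independent sets $I$ of $G$. A point $a$ is an accumulation point of the zeros of a family of functions if every neighborhood of $a$ contains a zero of some member of the family. A self-avoiding walk (SAW) of length $i$ from $v$ is a walk $v=v_0,\dots,v_i$ with all vertices distinct; $\mathcal{N}_{\le \ell}(G,v)$ is the number of SAWs of length between $1$ and $\ell$ starting at $v$. ''$\mu_{\log}(\mathcal{H})\le d$'' means: there exist constants $a,c$ such that for every $G=(V,E)\in\mathcal{H}$, every $v\in V$ and every $\ell\ge a\log|V|$, $\mathcal{N}_{\le\ell}(G,v)\le c\,d^\ell$. For $x>1$, $\lambda_c(x)=x^x/(x-1)^{x+1}$. *)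

From HB Require Import structures.
From mathcomp Require Import all_boot all_order all_algebra.
From mathcomp Require Import all_classical all_reals.
From mathcomp Require Import exp.
From mathcomp Require Import complex.
From mathcomp Require Import Rstruct.
From Stdlib Require Import Rdefinitions.

Set Implicit Arguments.
Unset Strict Implicit.
Unset Printing Implicit Defensive.

Import Order.TTheory GRing.Theory Num.Theory.
Local Open Scope ring_scope.

Notation RR := Rdefinitions.R.
Notation CC := (complex RR).

Record sgraph := SGraph {
  gV :> finType;
  gadj : rel gV;
  gadj_sym : symmetric gadj;
  gadj_irr : irreflexive gadj }.

Definition independent (G : sgraph) (I : {set G}) : bool :=
  [forall x in I, forall y in I, ~~ gadj x y].

Definition Z (G : sgraph) (z : CC) : CC :=
  \sum_(I : {set G} | independent I) z ^+ #|I|.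

Definition saw (G : sgraph) (v : G) (s : seq G) : bool :=
  path (@gadj G) v s && uniq (v :: s).

Definition N_le (G : sgraph) (v : G) (l : nat) : nat :=
  \sum_(1 <= i < l.+1) #|[set t : i.-tuple G | saw v t]|.

Definition mu_log_le (H : sgraph -> Prop) (d : RR) : Prop :=
  exists a c : RR, forall G : sgraph, H G -> forall (v : G) (l : nat),
    a * ln (#|G|%:R) <= l%:R -> (N_le v l)%:R <= c * d ^+ l.

Definition lambda_c (x : RR) : RR := powR x x / powR (x - 1) (x + 1).

Definition zero_accum (H : sgraph -> Prop) (a : CC) : Prop :=
  forall eps : RR, 0 < eps ->
    exists G : sgraph, H G /\ exists z : CC, Z G z = 0 /\ `|z - a| < (eps%:C)%C.

(* Let G_k be the complete multipartite graph with one part of size 2k and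
   m = 2^k parts of size k.  Its independence polynomial is u^2 + m u - m with
   u = (1 + z)^k, which vanishes at u = -U, where U ~ 2^k is the positive root
   of U^2 = m U + m.  Hence 1 + z = U^(1/k) e^(i pi/k) is a zero of Z_(G_k),
   and it tends to 2 as k grows: the zeros accumulate at z = 1 < 4 = lambda_c(2).
   Padding G_k with isolated vertices only multiplies Z by a power of 1 + z,
   but, since a self-avoiding walk never leaves G_k, enough padding makes every
   SAW count at most the number of vertices, so mu_log <= 2 holds with
   a = 1 / ln 2 and c = 1. *)

From HB Require Import structures.
(* all_classical comes first so that the names it shadows (set0, subsetP,
   inE, ...) keep their finset/fintype meaning. *)
From mathcomp Require Import all_classical all_reals.
From mathcomp Require Import all_boot all_order all_algebra.
From mathcomp Require Import exp complex Rstruct ring lra zify.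
From Stdlib Require Import Rtrigo1 Ratan.

Set Implicit Arguments.
Unset Strict Implicit.
Unset Printing Implicit Defensive.

Import Order.TTheory GRing.Theory Num.Theory.
Local Open Scope ring_scope.

Lemma sum_subsets_expr (R : comPzSemiRingType) (T : finType) (A : {set T}) (z : R) :
  \sum_(I : {set T} | I \subset A) z ^+ #|I| = (1 + z) ^+ #|A|.
Proof.
pose F i := if i \in A then z else 0.
have distr := @bigA_distr R 0 1 *%R +%R T F (fun _ => 1).
transitivity (\prod_i (F i + 1)); last first.
  rewrite (bigID (mem A)) /= /F (eq_bigr (fun _ => 1 + z)) => [|i ->]; last exact: addrC.
  rewrite prodr_const (eq_bigr (fun _ => 1)) => [|i /negbTE ->]; last exact: add0r.
  by rewrite prodr_const expr1n mulr1 cardE.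
rewrite distr big_mkcond; apply: eq_bigr => I _ /=; rewrite /F.
case: ifPn => [/subsetP sIA | /subsetPn[x xI xNA]].
  by rewrite -big_mkcond /= (eq_bigr (fun _ => z)) ?prodr_const // => i /sIA ->.
by rewrite (bigD1 x) //= xI (negbTE xNA) mul0r.
Qed.

Lemma sum_nonempty_subsets_expr (R : comPzRingType) (T : finType) (A : {set T}) (z : R) :
  \sum_(I : {set T} | (I != set0) && (I \subset A)) z ^+ #|I| = (1 + z) ^+ #|A| - 1.
Proof.
rewrite -sum_subsets_expr [in RHS](bigD1 set0) ?sub0set //= cards0 expr0 addrC addrK.
by apply: eq_bigl => I; rewrite andbC.
Qed.

Section CompleteMultipartite.
Variables (V P : finType) (part : V -> P).

Definition multipartite_adj : rel V := fun x y => part x != part y.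

Lemma multipartite_adj_sym : symmetric multipartite_adj.
Proof. by move=> x y; rewrite /multipartite_adj eq_sym. Qed.

Lemma multipartite_adj_irr : irreflexive multipartite_adj.
Proof. by move=> x; rewrite /multipartite_adj eqxx. Qed.

Definition complete_multipartite : sgraph :=
  SGraph multipartite_adj_sym multipartite_adj_irr.

Definition part_class (p : P) : {set V} := [set x | part x == p].

Lemma subset_part_class p {I : {set V}} {x} : x \in I ->
  (I \subset part_class p) = (part x == p) && @independent complete_multipartite I.
Proof.
move=> xI; apply/subsetP/andP => [sIp | [/eqP <- /forall_inP indI] y yI].
  have /sIp := xI; rewrite inE => /eqP px; split; first by rewrite px.
  by apply/forall_inP => y /sIp; rewrite inE => /eqP py; apply/forall_inP => u /sIp;
    rewrite inE /= /multipartite_adj py => /eqP ->; rewrite eqxx.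
by have /forall_inP/(_ y yI) := indI x xI; rewrite inE /= /multipartite_adj negbK eq_sym.
Qed.

Lemma Z_complete_multipartite (z : CC) :
  Z complete_multipartite z = 1 + \sum_p ((1 + z) ^+ #|part_class p| - 1).
Proof.
have ind0 : @independent complete_multipartite set0 by apply/forall_inP => x; rewrite inE.
rewrite /Z (bigD1 set0) // cards0 expr0; congr (_ + _).
transitivity (\sum_(I : {set V} | I != set0) \sum_(p | I \subset part_class p) z ^+ #|I|).
  rewrite big_mkcondl; apply: eq_bigr => I /set0Pn[x xI].
  under eq_bigl => p do rewrite (subset_part_class p xI).
  case: ifP => indI; last by rewrite big_pred0 // => p; rewrite andbF.
  by under eq_bigl do rewrite andbT; rewrite (big_pred1 (part x)).
rewrite (exchange_big_dep predT) //; apply: eq_bigr => p _.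
exact: sum_nonempty_subsets_expr.
Qed.

End CompleteMultipartite.

Lemma sum_nat_ltn_le (m n K : nat) : (\sum_(m <= i < n) (i < K) <= K)%N.
Proof.
rewrite -big_mkcond sum1_count -size_filter -[K in (_ <= K)%N](size_iota 0).
apply: (uniq_leq_size (filter_uniq _ (iota_uniq _ _))) => i.
by rewrite mem_filter !mem_iota add0n => /andP[->].
Qed.

Section SelfAvoidingWalks.
Variable G : sgraph.

Lemma saw_size_lt (v : G) (t : seq G) : saw v t -> (size t < #|G|)%N.
Proof.
by case/andP=> _ /card_uniqP size_vt; have := max_card (mem (v :: t)); rewrite size_vt.
Qed.

Lemma card_saw_le (v : G) i :
  (#|[set t : i.-tuple G | saw v t]| <= (i < #|G|) * #|G| ^ #|G|)%N.
Proof.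
case: ltnP => [iG | Gi]; last first.
  rewrite leqn0 cards_eq0; apply/eqP/setP => t; rewrite !inE.
  by apply/negP => /saw_size_lt; rewrite size_tuple ltnNge Gi.
rewrite mul1n (leq_trans (max_card _)) // card_tuple leq_pexp2l //.
  exact: leq_ltn_trans iG.
exact: ltnW.
Qed.

Lemma N_le_bounded (v : G) l : (N_le v l <= #|G| * #|G| ^ #|G|)%N.
Proof.
rewrite /N_le (leq_trans (leq_sum _ (fun i _ => card_saw_le v i))) //.
by rewrite -big_distrl /= leq_mul ?sum_nat_ltn_le.
Qed.

End SelfAvoidingWalks.

Section SetsOfSum.
Variables T1 T2 : finType.

Lemma preimset_inl_setU (A : {set T1}) (B : {set T2}) :
  inl @^-1: (inl @: A :|: inr @: B) = A.
Proof.
apply/setP => x; rewrite !inE (mem_imset _ _ inl_inj) orbC.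
by case: imsetP => // -[].
Qed.

Lemma preimset_inr_setU (A : {set T1}) (B : {set T2}) :
  inr @^-1: (inl @: A :|: inr @: B) = B.
Proof.
apply/setP => x; rewrite !inE (mem_imset _ _ inr_inj).
by case: imsetP => // -[].
Qed.

Lemma setU_imset_preimset (I : {set T1 + T2}) :
  inl @: (inl @^-1: I) :|: inr @: (inr @^-1: I) = I.
Proof.
apply/setP => -[x|x]; rewrite !inE ?(mem_imset _ _ inl_inj) ?(mem_imset _ _ inr_inj) inE.
  by rewrite orbC; case: imsetP => // -[].
by case: imsetP => // -[].
Qed.

Lemma card_set_sum (I : {set T1 + T2}) :
  #|I| = (#|inl @^-1: I| + #|inr @^-1: I|)%N.
Proof.
rewrite -!sum1_card [LHS]big_mkcond big_sumType -!big_mkcond.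
by congr (_ + _)%N; apply: eq_bigl => x; rewrite inE.
Qed.

End SetsOfSum.

Section AddIsolated.
Variables (G : sgraph) (n : nat).

Definition isolated_adj : rel (G + 'I_n) := fun x y =>
  if (x, y) is (inl a, inl b) then gadj a b else false.

Lemma isolated_adj_sym : symmetric isolated_adj.
Proof. by case=> [a|a] [b|b] //=; apply: gadj_sym. Qed.

Lemma isolated_adj_irr : irreflexive isolated_adj.
Proof. by case=> [a|a] //=; apply: gadj_irr. Qed.

Definition add_isolated : sgraph := SGraph isolated_adj_sym isolated_adj_irr.

Lemma card_add_isolated : #|add_isolated| = (#|G| + n)%N.
Proof. by rewrite card_sum card_ord. Qed.

Lemma independent_add_isolated (I : {set add_isolated}) :
  independent I = independent (inl @^-1: I).
Proof.
apply/forall_inP/forall_inP => [indI a | indA [a|a] aI].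
- rewrite inE => aI; apply/forall_inP => b; rewrite inE => bI.
  by have /forall_inP/(_ _ bI) := indI _ aI.
- apply/forall_inP => -[b|b] bI //=.
  move: (indA a); rewrite inE => /(_ aI)/forall_inP/(_ b).
  by rewrite inE => /(_ bI).
- by apply/forall_inP.
Qed.

Lemma Z_add_isolated (z : CC) : Z add_isolated z = (1 + z) ^+ n * Z G z.
Proof.
pose join (AB : {set G} * {set 'I_n}) : {set add_isolated} := inl @: AB.1 :|: inr @: AB.2.
rewrite /Z (reindex join) /=; last first.
  exists (fun I : {set add_isolated} => (inl @^-1: I, inr @^-1: I)) => [[A B] _ | I _].
    by rewrite preimset_inl_setU preimset_inr_setU.
  exact: setU_imset_preimset.
transitivity (\sum_(A | @independent G A) \sum_(B : {set 'I_n}) z ^+ #|A| * z ^+ #|B|).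
  rewrite pair_big; apply: eq_big => -[A B] /=.
    by rewrite independent_add_isolated preimset_inl_setU andbT.
  by rewrite card_set_sum preimset_inl_setU preimset_inr_setU exprD.
rewrite mulrC big_distrl; apply: eq_bigr => A _ /=; rewrite -big_distrr /=.
rewrite -[in RHS](card_ord n) -cardsT -sum_subsets_expr.
by under [in RHS]eq_bigl do rewrite subsetT.
Qed.

Lemma saw_map_inl (w : G) (t : seq G) : @saw add_isolated (inl w) (map inl t) = saw w t.
Proof. by rewrite /saw -map_cons (map_inj_uniq inl_inj) (@mono_path _ _ inl (@gadj G)). Qed.

Lemma path_add_isolated_inl (w : G) (t : seq add_isolated) :
  path (@gadj add_isolated) (inl w) t -> exists t' : seq G, t = map inl t'.
Proof.
elim: t w => [|[y|y] t IHt] w //=; first by exists [::].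
by case/andP=> _ /IHt[t' ->]; exists (y :: t').
Qed.

Lemma N_le_add_isolated (v : add_isolated) l : (N_le v l <= #|G| * #|G| ^ #|G|)%N.
Proof.
case: v => [w|a]; last first.
  rewrite /N_le big_nat big1 // => i /andP[i_gt0 _].
  apply/eqP; rewrite cards_eq0; apply/eqP/setP => -[[|x t] /= sz]; rewrite !inE //.
  by rewrite -(eqP sz) in i_gt0.
apply: leq_trans (N_le_bounded w l); apply: leq_sum => i _.
apply: leq_trans (leq_imset_card (@map_tuple _ _ _ inl) _); apply: subset_leq_card.
apply/subsetP => t; rewrite inE => sawt; apply/imsetP.
case/andP: (sawt) => /path_add_isolated_inl[t' et] _.
have sz : size t' == i by rewrite -(size_map (@inl G 'I_n)) -et size_tuple.
exists (Tuple sz); first by rewrite inE -saw_map_inl -et.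
by apply: val_inj; rewrite /= et.
Qed.

End AddIsolated.

Section TwoSizedParts.
Variables k m : nat.

Definition two_sized_part (x : (bool * 'I_k) + ('I_m * 'I_k)) : 'I_m.+1 :=
  if x is inr (p, _) then lift ord0 p else ord0.

Lemma card_part_class_ord0 : #|part_class two_sized_part ord0| = (2 * k)%N.
Proof.
have -> : part_class two_sized_part ord0 = inl @: setT.
  apply/setP => -[x|[p i]]; rewrite inE /=.
    by rewrite eqxx (mem_imset _ _ inl_inj) inE.
  by rewrite eq_sym (negbTE (neq_lift _ _)); apply/esym/imsetP => -[].
by rewrite card_imset ?cardsT ?card_prod ?card_bool ?card_ord //; exact: inl_inj.
Qed.

Lemma card_part_class_lift (p : 'I_m) : #|part_class two_sized_part (lift ord0 p)| = k.
Proof.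
have -> : part_class two_sized_part (lift ord0 p) = [set inr (p, i) | i : 'I_k].
  apply/setP => -[x|[q i]]; rewrite !inE /=.
  - by apply/esym/imsetP => -[].
  rewrite (inj_eq (lift_inj (h := ord0))).
  apply/eqP/imsetP => [-> | [j _ [-> _]] //]; by exists i.
by rewrite card_imset ?cardsT ?card_ord // => i j [].
Qed.

Lemma Z_two_sized_parts (z : CC) : Z (complete_multipartite two_sized_part) z =
  ((1 + z) ^+ k) ^+ 2 + m%:R * (1 + z) ^+ k - m%:R.
Proof.
rewrite Z_complete_multipartite big_ord_recl card_part_class_ord0.
under eq_bigr do rewrite card_part_class_lift.
by rewrite sumr_const card_ord mulnC exprM -mulr_natl; ring.
Qed.

End TwoSizedParts.

Definition cis (t : RR) : CC := (cos t +i* sin t)%C.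

Lemma cisD s t : cis (s + t) = cis s * cis t.
Proof.
by rewrite /cis; simpc; rewrite cos_plus sin_plus; congr (_ +i* _)%C; rewrite addrC.
Qed.

Lemma cisMn t n : cis t ^+ n = cis (t *+ n).
Proof.
elim: n => [|n IHn]; first by rewrite /cis cos_0 sin_0.
by rewrite exprS IHn mulrS cisD.
Qed.

Lemma cis_pi : cis PI = -1.
Proof. by rewrite /cis cos_PI sin_PI; apply/eqP; rewrite eq_complex /= oppr0 !eqxx. Qed.

(* |cis t - 1|^2 = 2 - 2 cos t = 4 sin^2 (t/2) <= t^2 *)
Lemma norm_cis_sub1 t : 0 <= t <= PI -> `|cis t - 1| <= t%:C%C.
Proof.
move=> /andP[t_ge0 t_lePI].
have half_ge0 : 0 <= t / 2 by lra.
have half_lePI : t / 2 <= PI by lra.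
have sin_ge0 : 0 <= sin (t / 2) by apply/RleP/sin_ge_0; apply/RleP.
have sin_le : sin (t / 2) <= t / 2.
  have [->|t_neq0] := eqVneq t 0; first by rewrite mul0r sin_0.
  by apply/ltW/RltP/sin_lt_x/RltP; rewrite divr_gt0 // lt_def t_neq0.
have pyth : sin t ^+ 2 + cos t ^+ 2 = 1 by exact: sin2_cos2.
have cos_t : cos t = 1 - 2 * sin (t / 2) * sin (t / 2).
  have cos2 (a : RR) : cos (2 * a) = 1 - 2 * sin a * sin a := cos_2a_sin a.
  by rewrite -cos2 [2 * _]mulrC divfK ?pnatr_eq0.
rewrite normc_def lecR /= -[leRHS](ger0_norm t_ge0) -sqrtr_sqr ler_sqrt ?sqr_ge0 //.
have : sin (t / 2) * sin (t / 2) <= t / 2 * (t / 2) by rewrite ler_pM.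
rewrite !expr2 in pyth *; nra.
Qed.

Lemma bernoulli_ineq (R : realDomainType) (x : R) n : 0 <= x -> 1 + x *+ n <= (1 + x) ^+ n.
Proof.
move=> x_ge0; elim: n => [|n IHn]; first by rewrite mulr0n expr0 addr0.
have : 0 <= x *+ n by rewrite mulrn_wge0.
rewrite exprS mulrS; nra.
Qed.

Definition quad_root (R : rcfType) (m : R) : R := (m + Num.sqrt (m ^+ 2 + 4 * m)) / 2.

Section QuadRoot.
Variables (R : rcfType) (m : R) (m_ge0 : 0 <= m).

Let disc_ge0 : 0 <= m ^+ 2 + 4 * m. Proof. by rewrite addr_ge0 ?sqr_ge0 ?mulr_ge0. Qed.

Lemma quad_rootE : quad_root m ^+ 2 - m * quad_root m - m = 0.
Proof.
rewrite /quad_root; have := sqr_sqrtr disc_ge0; set s := Num.sqrt _ => s2.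
have -> : ((m + s) / 2) ^+ 2 - m * ((m + s) / 2) - m = (s ^+ 2 - m ^+ 2 - 4 * m) / 4.
  by field.
by rewrite s2; field.
Qed.

Lemma quad_root_bounds : m <= quad_root m <= m + 1.
Proof.
rewrite /quad_root; have := sqr_sqrtr disc_ge0; have := sqrtr_ge0 (m ^+ 2 + 4 * m).
set s := Num.sqrt _ => s_ge0 s2.
have m_le_s : m <= s by rewrite -ler_sqr ?nnegrE // s2 lerDl mulr_ge0.
have s_le : s <= m + 2 by rewrite -ler_sqr ?nnegrE ?addr_ge0 // s2; nra.
by rewrite ler_pdivrMr ?ler_pdivlMr //; apply/andP; split; lra.
Qed.

End QuadRoot.

Section ZeroNearTwo.
Variables (k : nat) (k_gt0 : (0 < k)%N).

Let U := quad_root (2 ^+ k : RR).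
Let U_bounds : 2 ^+ k <= U <= 2 ^+ k + 1.
Proof. by rewrite quad_root_bounds // exprn_ge0. Qed.
Let U_gt0 : 0 < U.
Proof. by case/andP: U_bounds => + _; apply: lt_le_trans; rewrite exprn_gt0. Qed.

Definition root_modulus : RR := U `^ k%:R^-1.

Lemma root_modulusX : root_modulus ^+ k = U.
Proof.
rewrite /root_modulus -powR_mulrn ?powR_ge0 // -powRrM mulVf ?pnatr_eq0 -?lt0n //.
by rewrite powRr1 // ltW.
Qed.

Lemma root_modulus_bounds : 2 <= root_modulus <= 2 + 2 / k%:R.
Proof.
have k_pos : 0 < k%:R :> RR by rewrite ltr0n.
have [U_ge U_le] := andP U_bounds.
have rm_ge0 : 0 <= root_modulus := powR_ge0 _ _.
apply/andP; split.
  by rewrite -(ler_pXn2r k_gt0) ?nnegrE ?ler0n // root_modulusX.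
have inv_k_ge0 : 0 <= k%:R^-1 :> RR by rewrite invr_ge0 ltW.
rewrite -(ler_pXn2r k_gt0) ?nnegrE ?addr_ge0 ?mulr_ge0 // root_modulusX.
have -> : 2 + 2 / k%:R = 2 * (1 + k%:R^-1) :> RR by rewrite mulrDr mulr1.
rewrite (le_trans U_le) // exprMn.
have := bernoulli_ineq k inv_k_ge0; rewrite -[_^-1 *+ k]mulr_natr mulVf ?gt_eqF //.
have : 1 <= 2 ^+ k :> RR by rewrite exprn_ege1 // ler1n.
nra.
Qed.

Definition near_two_zero : CC := root_modulus%:C%C * cis (PI / k%:R).

Lemma near_two_zeroX : near_two_zero ^+ k = (- U)%:C%C.
Proof.
rewrite exprMn cisMn -[_ *+ k]mulr_natr divfK ?pnatr_eq0 -?lt0n // cis_pi.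
by rewrite -rmorphXn root_modulusX mulrN1 rmorphN.
Qed.

Lemma norm_near_two_zero_sub2 : `|near_two_zero - 2| <= ((4 * PI + 2) / k%:R)%:C%C.
Proof.
have [r_ge2 r_le] := andP root_modulus_bounds.
have k_ge1 : 1 <= k%:R :> RR by rewrite ler1n.
have PI_gt0 : 0 < PI by apply/RltP/PI_RGT_0.
have PI_ge0 := ltW PI_gt0.
have theta_ge0 : 0 <= PI / k%:R by rewrite divr_ge0.
have theta_le : PI / k%:R <= PI by rewrite ler_pdivrMr ?ltr0n // ler_peMr.
have split : near_two_zero - 2 =
    root_modulus%:C%C * (cis (PI / k%:R) - 1) + (root_modulus - 2)%:C%C.
  by rewrite /near_two_zero rmorphB /= rmorph_nat; ring.
have r_ge0 : 0 <= root_modulus%:C%C by rewrite ler0c (le_trans _ r_ge2).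
have norm_r2 : `|(root_modulus - 2)%:C%C| = (root_modulus - 2)%:C%C.
  by rewrite ger0_norm // ler0c subr_ge0.
rewrite split (le_trans (ler_normD _ _)) // normrM (ger0_norm r_ge0) norm_r2.
have cis_le : `|cis (PI / k%:R) - 1| <= (PI / k%:R)%:C%C.
  by apply: norm_cis_sub1; rewrite theta_ge0 theta_le.
rewrite (le_trans (lerD (ler_wpM2l r_ge0 cis_le) (lexx _))) //.
rewrite -rmorphM -rmorphD lecR.
have two_k_le2 : 2 / k%:R <= 2 :> RR by rewrite ler_pdivrMr ?ler_peMr ?(lt_le_trans ltr01).
have : root_modulus * (PI / k%:R) <= 4 * (PI / k%:R) by rewrite ler_wpM2r //; lra.
rewrite [(4 * PI + 2) / _]mulrDl -[4 * PI / _]mulrA; lra.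
Qed.

End ZeroNearTwo.

Lemma mu_log_le_of_N_le_card (H : sgraph -> Prop) (d : RR) : 1 < d ->
  (forall G, H G -> forall (v : G) l, (N_le v l <= #|G|)%N) -> mu_log_le H d.
Proof.
move=> d_gt1 N_le_card; exists (ln d)^-1, 1 => G HG v l le_log.
have d_gt0 : 0 < d := lt_trans ltr01 d_gt1.
have card_gt0 : 0 < #|G|%:R :> RR by rewrite ltr0n; apply/card_gt0P; exists v.
have lnd_gt0 : 0 < ln d by rewrite ln_gt0.
rewrite mul1r (@le_trans _ _ #|G|%:R) ?ler_nat ?N_le_card //.
rewrite -ler_ln ?posrE ?exprn_gt0 // lnXn // -[ln d *+ l]mulr_natr.
have inv_lnd_gt0 : 0 < (ln d)^-1 by rewrite invr_gt0.
by rewrite -(ler_pM2l inv_lnd_gt0) mulrA mulVf ?gt_eqF ?mul1r.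
Qed.

Definition zero_graph (k : nat) : sgraph :=
  let G := complete_multipartite (@two_sized_part k (2 ^ k)) in
  add_isolated G (#|G| * #|G| ^ #|G|).

Definition zero_graphs (G : sgraph) : Prop := exists k, G = zero_graph k.

Lemma mu_log_zero_graphs : mu_log_le zero_graphs 2.
Proof.
apply: mu_log_le_of_N_le_card; first by rewrite ltr1n.
move=> _ [k ->] v l; apply: leq_trans (N_le_add_isolated v l) _.
by rewrite /zero_graph card_add_isolated leq_addl.
Qed.

Lemma Z_zero_graph k : (0 < k)%N -> Z (zero_graph k) (near_two_zero k - 1) = 0.
Proof.
move=> k_gt0; rewrite Z_add_isolated Z_two_sized_parts addrC subrK near_two_zeroX //.
set U := quad_root _; pose m : RR := (2 ^ k)%:R.
have U_root : U ^+ 2 - m * U - m = 0 by rewrite /m natrX quad_rootE ?exprn_ge0.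
rewrite -(rmorph_nat (real_complex RR)) -/m -!rmorphXn -rmorphM -rmorphD -rmorphB /=.
have -> : (- U) ^+ 2 + m * - U - m = U ^+ 2 - m * U - m by ring.
by rewrite U_root mulr0.
Qed.

Lemma zero_accum_zero_graphs : zero_accum zero_graphs 1%:C%C.
Proof.
move=> eps eps_gt0.
have PI_gt0 : 0 < PI by apply/RltP/PI_RGT_0.
pose N := (4 * PI + 2) / eps.
have N_ge0 : 0 <= N by apply: divr_ge0; [lra | exact: ltW].
pose k := (Num.Def.archi_bound N).+1.
have N_lt_k : N < k%:R by rewrite (lt_trans (archi_boundP N_ge0)) // ltr_nat.
exists (zero_graph k); split; first by exists k.
exists (near_two_zero k - 1); split; first exact: Z_zero_graph.
rewrite rmorph1 -addrA -opprD (le_lt_trans (norm_near_two_zero_sub2 _)) // ltcR.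
by rewrite ltr_pdivrMr ?ltr0n // [eps * _]mulrC -ltr_pdivrMr.
Qed.

Lemma zero_accum_not_zero_free (H : sgraph -> Prop) (a b : RR) :
  zero_accum H a%:C%C -> 0 <= a -> a < b -> forall delta : RR, 0 < delta ->
  ~ (forall G, H G -> forall z : CC,
       (exists z0 : RR, 0 <= z0 /\ z0 < b /\ `|z - z0%:C%C| < delta%:C%C) -> Z G z != 0).
Proof.
move=> accum a_ge0 a_lt_b delta delta_gt0 zero_free.
have [G [HG [z [Z_z near_a]]]] := accum delta delta_gt0.
have /eqP := zero_free G HG z (ex_intro _ a (conj a_ge0 (conj a_lt_b near_a))).
by rewrite Z_z.
Qed.

Lemma lambda_c2 : lambda_c 2 = 4.
Proof.
rewrite /lambda_c; change (2 `^ 2 / (2 - 1) `^ (2 + 1) = 4 :> RR).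
have -> : 2 - 1 = 1 :> RR by lra.
by rewrite powR1 divr1 powR_mulrn // expr2 -natrM.
Qed.

Theorem lemma3p2 :
  exists (d : RR) (H : sgraph -> Prop) (lam : RR),
    1 < d /\ mu_log_le H d /\ 0 < lam /\ lam < lambda_c d /\
    zero_accum H (lam%:C)%C /\
    (forall delta : RR, 0 < delta ->
       ~ (forall G : sgraph, H G -> forall z : CC,
            (exists z0 : RR, 0 <= z0 /\ z0 < lambda_c d /\ `|z - (z0%:C)%C| < (delta%:C)%C) ->
            Z G z != 0)).
Proof.
have one_lt_lambda_c2 : 1 < lambda_c 2 by rewrite lambda_c2 ltr1n.
exists 2, zero_graphs, 1; do !split => //.
- by rewrite ltr1n.
- exact: mu_log_zero_graphs.
- exact: zero_accum_zero_graphs.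
- exact: zero_accum_not_zero_free zero_accum_zero_graphs ler01 one_lt_lambda_c2.
Qed.
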